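(* Let $n$ be a positive integer. Define the graph $G=(V,E)$ with vertex set $V=\{\{i,j\}: i,j\in[n],\ i\neq j\}$ and edge set $E=\{(\{i,j\},\{j,k\}): i,j,k\in[n] \text{ pairwise distinct}\}$. Then there exists a subgraph $G'=(V,E')$ with $E'\subseteq E$ satisfying $|E'|\le n^2$ and $$\operatorname{dist}_{G'}(v_1,v_2)\le 4(\log_2(n)+1)\quad\text{for all } v_1,v_2\in V.$$
   Context: $\operatorname{dist}_{G'}$ denotes the shortest-path distance in $G'$. *)

From mathcomp Require Import all_boot.
From Stdlib Require Import Reals.
Set Implicit Arguments. Unset Strict Implicit. Unset Printing Implicit Defensive.

Definition is_vertex (n : nat) (A : {set 'I_n}) : bool := #|A| == 2.

Definition is_edge (n : nat) (e : {set {set 'I_n}}) : Prop :=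
  exists i j k : 'I_n, [/\ i != j, j != k, i != k &
    e = [set [set i; j]; [set j; k]]].

Definition adj (n : nat) (E' : {set {set {set 'I_n}}}) : rel {set 'I_n} :=
  fun u v => [set u; v] \in E'.

(* dist_{G'}(u,v) <= D : there is a walk in G' from u to v of length <= D
   (the shortest-path distance is the minimum of such lengths; +oo if none). *)
Definition dist_le (n : nat) (E' : {set {set {set 'I_n}}})
  (u v : {set 'I_n}) (D : R) : Prop :=
  exists s : seq {set 'I_n},
    path (adj E') u s /\ last u s = v /\ (INR (size s) <= D)%R.

Definition log2 (x : R) : R := (ln x / ln 2)%R.

(* Fix a hub element h.  The vertices {h, a} are joined pairwise, and every
   other vertex {a, b} with a < b is attached to the hub vertex {h, b}.  This
   spends at most one edge per ordered pair of distinct non-hub elements, so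
   fewer than n^2 edges, and any two vertices are joined by a walk
   v1 -- {h, a} -- {h, b} -- v2 of length at most 3 <= 4 (log2 n + 1). *)
From mathcomp Require Import all_boot.
From Stdlib Require Import Reals Lra.

Set Implicit Arguments.
Unset Strict Implicit.
Unset Printing Implicit Defensive.

Section Walks.
Variables (T : Type) (e : rel T).

Definition walk_le (u v : T) (k : nat) : Prop :=
  exists s : seq T, [/\ path e u s, last u s = v & size s <= k].

Lemma walk_le0 u : walk_le u u 0.
Proof. by exists [::]. Qed.

Lemma walk_le1 u v : e u v -> walk_le u v 1.
Proof. by move=> euv; exists [:: v]; rewrite /= euv. Qed.

Lemma walk_leW u v k l : k <= l -> walk_le u v k -> walk_le u v l.
Proof. by move=> kl [s [es ls sk]]; exists s; split=> //; apply: leq_trans kl. Qed.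

Lemma walk_le_trans u v w k l :
  walk_le u v k -> walk_le v w l -> walk_le u w (k + l).
Proof.
move=> [s [es ls sk]] [t [et lt tl]]; exists (s ++ t).
by rewrite cat_path last_cat size_cat ls es et lt leq_add.
Qed.

Lemma walk_le_sym u v k : symmetric e -> walk_le u v k -> walk_le v u k.
Proof.
move=> sym_e [s [es <- sk]]; exists (rev (belast u s)); split.
- by rewrite rev_path (eq_path (e' := e)) // => x y; rewrite sym_e.
- by case: s {es sk} => //= x s; rewrite rev_cons last_rcons.
- by rewrite size_rev size_belast.
Qed.

End Walks.

Lemma adj_sym (n : nat) (E' : {set {set {set 'I_n}}}) : symmetric (adj E').
Proof. by move=> u v; rewrite /adj setUC. Qed.

Lemma dist_le_walk_le (n : nat) (E' : {set {set {set 'I_n}}}) u v k (D : R) :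
  walk_le (adj E') u v k -> (INR k <= D)%R -> dist_le E' u v D.
Proof.
move=> [s [es ls sk]] kD; exists s; split=> //; split=> //.
by apply: Rle_trans kD; apply/le_INR/leP.
Qed.

Section StarSpanner.
Variables (n : nat) (h : 'I_n).

Definition star_pairs : {set 'I_n * 'I_n} :=
  [set p | [&& p.1 != h, p.2 != h & p.1 != p.2]].

Definition star_edge (p : 'I_n * 'I_n) : {set {set 'I_n}} :=
  if p.1 < p.2 then [set [set p.1; p.2]; [set h; p.2]]
  else [set [set h; p.1]; [set h; p.2]].

Definition star_spanner : {set {set {set 'I_n}}} := star_edge @: star_pairs.

Lemma star_spanner_edges e : e \in star_spanner -> is_edge e.
Proof.
case/imsetP=> -[a b]; rewrite inE /= => /and3P[ah bh ab] ->; rewrite /star_edge /=.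
case: ifP => _; first by exists a, b, h; rewrite [[set h; b]]setUC.
by exists a, h, b; rewrite [h == b]eq_sym [[set h; a]]setUC.
Qed.

Lemma card_star_spanner : #|star_spanner| <= n ^ 2.
Proof.
apply: leq_trans (leq_imset_card _ _) _.
(* [^] is Stdlib's [Nat.pow] here (Reals is imported after all_boot). *)
by apply: leq_trans (max_card _) _; rewrite card_prod card_ord -[n ^ 2]/(n * (n * 1)) muln1.
Qed.

Lemma adj_star_hub a b :
  a != h -> b != h -> a != b -> adj star_spanner [set h; a] [set h; b].
Proof.
move=> ah bh; wlog ba : a b ah bh / b < a => [hyp|_].
  move=> ab; have := ab; rewrite neq_ltn => /orP[lt_ab|lt_ba].
    by rewrite adj_sym; apply: hyp; rewrite // eq_sym.
  exact: hyp.
apply/imsetP; exists (a, b); first by rewrite inE /= ah bh neq_ltn ba orbT.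
by rewrite /star_edge /= ltnNge ltnW.
Qed.

Lemma adj_star_spoke a b :
  a != h -> b != h -> a < b -> adj star_spanner [set a; b] [set h; b].
Proof.
move=> ah bh ab; apply/imsetP; exists (a, b); last by rewrite /star_edge /= ab.
by rewrite inE /= ah bh neq_ltn ab.
Qed.

Lemma walk_le_star_hub a b :
  a != h -> b != h -> walk_le (adj star_spanner) [set h; a] [set h; b] 1.
Proof.
move=> ah bh; have [<-|ab] := eqVneq a b; first exact/walk_leW/walk_le0.
exact/walk_le1/adj_star_hub.
Qed.

Lemma walk_le_star_to_hub v : is_vertex v ->
  exists2 a, a != h & walk_le (adj star_spanner) v [set h; a] 1.
Proof.
case/cards2P=> x [y [xy ->]].
wlog lt_xy : x y {xy} / x < y => [hyp|].
  by move: xy; rewrite neq_ltn => /orP[/hyp //|/hyp]; rewrite setUC.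
have [<-|xh] := eqVneq x h.
  by exists y; [rewrite neq_ltn lt_xy orbT | apply/walk_leW/walk_le0].
have [<-|yh] := eqVneq y h.
  by exists x; [rewrite neq_ltn lt_xy | rewrite setUC; apply/walk_leW/walk_le0].
by exists y => //; apply/walk_le1/adj_star_spoke.
Qed.

Lemma walk_le_star u v : is_vertex u -> is_vertex v ->
  walk_le (adj star_spanner) u v 3.
Proof.
move=> /walk_le_star_to_hub[a ah ua] /walk_le_star_to_hub[b bh vb].
have bv := walk_le_sym (@adj_sym n star_spanner) vb.
exact: walk_le_trans (walk_le_trans ua (walk_le_star_hub ah bh)) bv.
Qed.

End StarSpanner.

Lemma log2_ge0 (x : R) : (1 <= x)%R -> (0 <= log2 x)%R.
Proof.
move=> x_ge1; apply: Rle_mult_inv_pos; rewrite -ln_1.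
  case: (Rle_lt_or_eq_dec _ _ x_ge1) => [x_gt1|<-]; last exact: Rle_refl.
  by apply/Rlt_le/ln_increasing; lra.
by apply: ln_increasing; lra.
Qed.

Theorem lemma9 (n : nat) (hn : 0 < n) :
  exists E' : {set {set {set 'I_n}}},
    [/\ (forall e, e \in E' -> is_edge e),
        #|E'| <= n ^ 2 &
        forall v1 v2 : {set 'I_n}, is_vertex v1 -> is_vertex v2 ->
          dist_le E' v1 v2 (4 * (log2 (INR n) + 1))%R].
Proof.
pose h : 'I_n := Ordinal hn.
exists (star_spanner h); split; [exact: star_spanner_edges | exact: card_star_spanner |].
move=> v1 v2 hv1 hv2; apply: dist_le_walk_le (walk_le_star h hv1 hv2) _.
have n_ge1 : (1 <= INR n)%R by apply: (le_INR 1); apply/leP.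
have := log2_ge0 n_ge1; rewrite /=; lra.
Qed.
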